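(* Let $f,g$ be smooth functions on an open interval $J\subset\mathbb{R}$, let $F$ be an antiderivative of $f$, $M=e^{2F}$, and let $V$ and $Q$ be functions on $J$ with $V'=Mg$ and $Q'=\sqrt M=e^{F}$. Suppose there are constants $A$ and $B\neq0$ and a constant $V_0$ such that $V=AQ^2+B/Q^2+V_0$ on $J$ (with $Q\neq0$ on $J$). Then, wherever the denominators below are nonzero, $$f=-\frac54\,\frac{g''+(fg)'}{g'+fg-2A}+\frac{g'''+(fg)''}{g''+(fg)'} .$$
   Context: Primes denote derivatives with respect to $x$. This is the necessary condition for the potential $V(x)=\int^xM(s)g(s)\,ds$ of the Liénard-II equation $\ddot x+f(x)\dot x^2+g(x)=0$ (with Lagrangian $L=\frac12M(x)\dot x^2-V(x)$, $M$ the Jacobi last multiplier) to be of the superintegrable form $AQ^2+B/Q^2$. *)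

From Stdlib Require Import Reals.
Open Scope R_scope.

Definition is_open_interval (J : R -> Prop) : Prop :=
  (exists x, J x) /\
  (forall x y z, J x -> J z -> x <= y <= z -> J y) /\
  (forall x, J x -> exists e, 0 < e /\ forall y, Rabs (y - x) < e -> J y).

From Stdlib Require Import Reals Lra.
Open Scope R_scope.

(* Write [W = exp F = sqrt M], so that [Q' = W], [W' = f W] and [(1/Q)' = - W / Q^2].
   Differentiating [V = A Q^2 + B / Q^2 + V0] and dividing by [W] gives
   [W g = 2 A Q - 2 B / Q^3]; differentiating twice more yields
   [g' + f g - 2 A = 6 B / Q^4], [g'' + (fg)' = - 24 B W / Q^5] and
   [g''' + (fg)'' = 120 B W^2 / Q^6 - 24 B f W / Q^5].  Hence the two quotients of the
   statement are [- 4 W / Q] and [f - 5 W / Q], and the weighted sum eliminates [W / Q]. *)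

Lemma derivable_pt_lim_unique_on_open (J : R -> Prop) (f1 f2 : R -> R) (x l1 l2 : R) :
  is_open_interval J -> (forall y, J y -> f1 y = f2 y) -> J x ->
  derivable_pt_lim f1 x l1 -> derivable_pt_lim f2 x l2 -> l1 = l2.
Proof.
  intros (_ & _ & Hopen) E Jx D1 D2.
  destruct (Hopen x Jx) as (e & He & Hball).
  apply (uniqueness_limite f2 x); [| exact D2].
  apply (derivable_pt_lim_locally_ext f1 f2 x (x - e) (x + e)); [lra | | exact D1].
  intros z Hz. apply E, Hball, Rabs_def1; lra.
Qed.

Lemma derivable_pt_lim_pow_comp (h : R -> R) (x l : R) (n : nat) :
  derivable_pt_lim h x l ->
  derivable_pt_lim (fun y => h y ^ n) x (INR n * h x ^ pred n * l).
Proof.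
  intros Dh.
  exact (derivable_pt_lim_comp h (fun y => y ^ n) x l _ Dh (derivable_pt_lim_pow (h x) n)).
Qed.

Lemma derivable_pt_lim_inv_comp (h : R -> R) (x l : R) :
  h x <> 0 -> derivable_pt_lim h x l ->
  derivable_pt_lim (fun y => / h y) x (- l * (/ h x) ^ 2).
Proof.
  intros Hx Dh.
  assert (D := derivable_pt_lim_div _ _ x _ _ (derivable_pt_lim_const 1 x) Dh Hx).
  replace (- l * (/ h x) ^ 2) with ((0 * h x - l * 1) / Rsqr (h x))
    by (unfold Rsqr; field; exact Hx).
  apply (derivable_pt_lim_ext _ _ _ _ (fun y => Rmult_1_l (/ h y)) D).
Qed.

Lemma exp_double (x : R) : exp (2 * x) = exp x ^ 2.
Proof. replace (2 * x) with (x + x) by ring. rewrite exp_plus. ring. Qed.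

(* Hypotheses are tried before the product rule, so that [(fun y => f y * g y)] is
   differentiated to [p1] rather than to [f' g + f g']. *)
Ltac differentiate :=
  repeat first
    [ solve [eauto]
    | apply derivable_pt_lim_minus
    | apply derivable_pt_lim_plus
    | apply derivable_pt_lim_opp
    | apply derivable_pt_lim_mult
    | apply derivable_pt_lim_pow_comp
    | apply derivable_pt_lim_const ].

Section SuperintegrablePotential.

Variables (J : R -> Prop) (f g g1 g2 g3 p1 p2 F Q : R -> R) (A B : R).
Hypothesis HJ : is_open_interval J.
Hypothesis Hg1 : forall x, J x -> derivable_pt_lim g x (g1 x).
Hypothesis Hg2 : forall x, J x -> derivable_pt_lim g1 x (g2 x).
Hypothesis Hg3 : forall x, J x -> derivable_pt_lim g2 x (g3 x).
Hypothesis Hp1 : forall x, J x -> derivable_pt_lim (fun y => f y * g y) x (p1 x).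
Hypothesis Hp2 : forall x, J x -> derivable_pt_lim p1 x (p2 x).
Hypothesis HF : forall x, J x -> derivable_pt_lim F x (f x).
Hypothesis HQ : forall x, J x -> derivable_pt_lim Q x (exp (F x)).
Hypothesis HQ0 : forall x, J x -> Q x <> 0.

Lemma derivable_pt_lim_exp_F (x : R) :
  J x -> derivable_pt_lim (fun y => exp (F y)) x (exp (F x) * f x).
Proof.
  intros Jx.
  exact (derivable_pt_lim_comp F exp x _ _ (HF x Jx) (derivable_pt_lim_exp (F x))).
Qed.

Lemma derivable_pt_lim_inv_Q (x : R) :
  J x -> derivable_pt_lim (fun y => / Q y) x (- exp (F x) * (/ Q x) ^ 2).
Proof. intros Jx. apply derivable_pt_lim_inv_comp; auto. Qed.

Hint Resolve derivable_pt_lim_exp_F derivable_pt_lim_inv_Q : core.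

Lemma expF_mul_g_eq (V : R -> R) (V0 : R) :
  (forall x, J x -> derivable_pt_lim V x (exp (2 * F x) * g x)) ->
  (forall x, J x -> V x = A * Q x ^ 2 + B / Q x ^ 2 + V0) ->
  forall x, J x -> exp (F x) * g x = 2 * A * Q x - 2 * B * (/ Q x) ^ 3.
Proof.
  intros HV HVQ x Jx.
  assert (E : forall y, J y -> V y = A * Q y ^ 2 + B * (/ Q y) ^ 2 + V0)
    by (intros y Jy; rewrite HVQ by exact Jy; field; auto).
  epose proof (derivable_pt_lim_unique_on_open J _ _ x _ _ HJ E Jx
                 (HV x Jx) ltac:(differentiate)) as Hd.
  rewrite exp_double in Hd; simpl in Hd.
  apply (Rmult_eq_reg_l (exp (F x))); [lra | apply exp_neq_0].
Qed.

Lemma dg_add_fg_eq :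
  (forall x, J x -> exp (F x) * g x = 2 * A * Q x - 2 * B * (/ Q x) ^ 3) ->
  forall x, J x -> g1 x + f x * g x - 2 * A = 6 * B * (/ Q x) ^ 4.
Proof.
  intros E x Jx.
  epose proof (derivable_pt_lim_unique_on_open J _ _ x _ _ HJ E Jx
                 ltac:(differentiate) ltac:(differentiate)) as Hd.
  simpl in Hd.
  apply (Rmult_eq_reg_l (exp (F x))); [lra | apply exp_neq_0].
Qed.

Lemma d2g_add_dfg_eq :
  (forall x, J x -> g1 x + f x * g x - 2 * A = 6 * B * (/ Q x) ^ 4) ->
  forall x, J x -> g2 x + p1 x = - 24 * B * exp (F x) * (/ Q x) ^ 5.
Proof.
  intros E x Jx.
  epose proof (derivable_pt_lim_unique_on_open J _ _ x _ _ HJ E Jx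
                 ltac:(differentiate) ltac:(differentiate)) as Hd.
  simpl in Hd. lra.
Qed.

Lemma d3g_add_d2fg_eq :
  (forall x, J x -> g2 x + p1 x = - 24 * B * exp (F x) * (/ Q x) ^ 5) ->
  forall x, J x ->
    g3 x + p2 x = 120 * B * exp (F x) ^ 2 * (/ Q x) ^ 6
                  - 24 * B * exp (F x) * f x * (/ Q x) ^ 5.
Proof.
  intros E x Jx.
  epose proof (derivable_pt_lim_unique_on_open J _ _ x _ _ HJ E Jx
                 ltac:(differentiate) ltac:(differentiate)) as Hd.
  simpl in Hd. lra.
Qed.

End SuperintegrablePotential.

Lemma sqrt_exp_double (x : R) : sqrt (exp (2 * x)) = exp x.
Proof. rewrite exp_double. apply sqrt_pow2, Rlt_le, exp_pos. Qed.

Theorem mainTheorem13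
  (J : R -> Prop) (HJ : is_open_interval J)
  (f g g1 g2 g3 p1 p2 F V Q : R -> R) (A B V0 : R)
  (Hg1 : forall x, J x -> derivable_pt_lim g x (g1 x))
  (Hg2 : forall x, J x -> derivable_pt_lim g1 x (g2 x))
  (Hg3 : forall x, J x -> derivable_pt_lim g2 x (g3 x))
  (Hp1 : forall x, J x -> derivable_pt_lim (fun y => f y * g y) x (p1 x))
  (Hp2 : forall x, J x -> derivable_pt_lim p1 x (p2 x))
  (HF : forall x, J x -> derivable_pt_lim F x (f x))
  (HV : forall x, J x -> derivable_pt_lim V x (exp (2 * F x) * g x))
  (HQ : forall x, J x -> derivable_pt_lim Q x (sqrt (exp (2 * F x))))
  (HB : B <> 0)
  (HQ0 : forall x, J x -> Q x <> 0)
  (HVQ : forall x, J x -> V x = A * (Q x) ^ 2 + B / (Q x) ^ 2 + V0) :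
  forall x, J x ->
    g1 x + f x * g x - 2 * A <> 0 ->
    g2 x + p1 x <> 0 ->
    f x = - (5 / 4) * ((g2 x + p1 x) / (g1 x + f x * g x - 2 * A))
          + (g3 x + p2 x) / (g2 x + p1 x).
Proof.
  intros x Jx _ _.
  assert (HQ' : forall y, J y -> derivable_pt_lim Q y (exp (F y)))
    by (intros y Jy; rewrite <- sqrt_exp_double; auto).
  assert (E1 := expF_mul_g_eq J g F Q A B HJ HQ' HQ0 V V0 HV HVQ).
  assert (E2 := dg_add_fg_eq J f g g1 F Q A B HJ Hg1 HF HQ' HQ0 E1).
  assert (E3 := d2g_add_dfg_eq J f g g1 g2 p1 F Q A B HJ Hg2 Hp1 HQ' HQ0 E2).
  assert (E4 := d3g_add_d2fg_eq J f g2 g3 p1 p2 F Q B HJ Hg3 Hp2 HF HQ' HQ0 E3).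
  rewrite (E2 x Jx), (E3 x Jx), (E4 x Jx).
  field; repeat split; auto using exp_neq_0.
Qed.
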